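(* Let $\kappa$ be a Mahlo cardinal and let $A\subseteq\kappa$ be a stationary set of regular cardinals. Then $\kappa\in\operatorname{spec}(A)$.
   Context: For a set $A$ of regular cardinals, $\prod A$ is the set of functions $f$ with domain $A$ and $f(a)\in a$, ordered by pointwise domination. $\operatorname{spec}(A)$ is the set of regular cardinals $\lambda$ with $(\prod A,<)\geq_T\lambda$ in the Tukey order; equivalently, regular $\lambda$ such that there exists $\mathcal{F}\subseteq\prod A$ of size $\lambda$ such that every $\lambda$-sized subset of $\mathcal{F}$ is unbounded in $(\prod A,<)$ (i.e., not pointwise dominated by a single element of $\prod A$). *)

(* Ordinals below kappa are modelled as the elements of a type
   T equipped with a strict well-order lt whose order type is kappa; an element
   a : T is identified with the ordinal {x | lt x a} (its initial segment). *)

Definition injective {X Y : Type} (f : X -> Y) : Prop :=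
  forall x y, f x = f y -> x = y.

Definition le_card (X Y : Type) : Prop := exists f : X -> Y, injective f.

Section Ord.
Variable T : Type.
Variable lt : T -> T -> Prop.

Definition le (x y : T) : Prop := x = y \/ lt x y.

Definition is_well_order : Prop :=
  (forall x, ~ lt x x) /\
  (forall x y z, lt x y -> lt y z -> lt x z) /\
  (forall x y, lt x y \/ x = y \/ lt y x) /\
  well_founded lt.

Definition seg (a : T) : Type := {x : T | lt x a}.

Definition is_cardinal_pt (a : T) : Prop :=
  forall b, lt b a -> ~ le_card (seg a) (seg b).

Definition cofinal_in (a : T) (S : T -> Prop) : Prop :=
  (forall x, S x -> lt x a) /\ (forall x, lt x a -> exists y, S y /\ le x y).

Definition regular_pt (a : T) : Prop :=
  le_card nat (seg a) /\ is_cardinal_pt a /\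
  forall S, cofinal_in a S -> le_card (seg a) {x : T | S x}.

Definition unbounded (S : T -> Prop) : Prop :=
  forall x, exists y, S y /\ le x y.

Definition kappa_regular_cardinal : Prop :=
  le_card nat T /\
  (forall b : T, ~ le_card T (seg b)) /\
  (forall S, unbounded S -> le_card T {x : T | S x}).

Definition kappa_uncountable : Prop := ~ le_card T nat.

Definition kappa_strong_limit : Prop :=
  forall b : T, ~ le_card T (seg b -> bool).

Definition is_sup (s : T) (S : T -> Prop) : Prop :=
  (forall x, S x -> le x s) /\ (forall u, (forall x, S x -> le x u) -> le s u).

Definition closed (C : T -> Prop) : Prop :=
  forall S : T -> Prop, (forall x, S x -> C x) -> (exists x, S x) ->
    forall s, is_sup s S -> C s.

Definition club (C : T -> Prop) : Prop := closed C /\ unbounded C.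

Definition stationary (A : T -> Prop) : Prop :=
  forall C, club C -> exists x, A x /\ C x.

Definition kappa_mahlo : Prop :=
  kappa_regular_cardinal /\ kappa_uncountable /\ kappa_strong_limit /\
  stationary regular_pt.

Definition prodA (A : T -> Prop) : Type :=
  forall a : {x : T | A x}, seg (proj1_sig a).

Definition dominated (A : T -> Prop) (f g : prodA A) : Prop :=
  forall a, lt (proj1_sig (f a)) (proj1_sig (g a)).

(* kappa \in spec(A): some F subset of prod A of size kappa (given as an
   injective T-indexed family) all of whose kappa-sized subsets are unbounded *)
Definition kappa_in_spec (A : T -> Prop) : Prop :=
  exists F : T -> prodA A, injective F /\
    forall S : T -> Prop, le_card T {x : T | S x} ->
      ~ (exists g : prodA A, forall i, S i -> dominated A (F i) g).

End Ord.

(* Send an ordinal al < kappa to the function a |-> al, defined on the a in A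
   above al (and arbitrary elsewhere).  Stationarity of A gives points of A
   above any two ordinals, so this family is injective.  A family of kappa
   many of its members is indexed by an unbounded S, the ordinals in which S
   is cofinal form a club (cf(kappa) > omega), and so some a in A has S
   cofinal in it: a bound g has g(a) < a, hence g(a) <= y < a for some y in S,
   and the member indexed by y takes the value y at a, so g cannot dominate
   it. *)

From Stdlib Require Import Classical ClassicalEpsilon ProofIrrelevance.

Section WellOrder.
Variable T : Type.
Variable lt : T -> T -> Prop.
Hypothesis Hwo : is_well_order T lt.

Local Notation leT := (le T lt).

Lemma lt_irrefl x : ~ lt x x.
Proof. apply Hwo. Qed.

Lemma lt_trans x y z : lt x y -> lt y z -> lt x z.
Proof. apply Hwo. Qed.

Lemma lt_total x y : lt x y \/ x = y \/ lt y x.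
Proof. apply Hwo. Qed.

Lemma lt_wf : well_founded lt.
Proof. apply Hwo. Qed.

Lemma le_lt_trans x y z : leT x y -> lt y z -> lt x z.
Proof. intros [-> | Hxy] Hyz; [exact Hyz | exact (lt_trans _ _ _ Hxy Hyz)]. Qed.

Lemma lt_le_trans x y z : lt x y -> leT y z -> lt x z.
Proof. intros Hxy [<- | Hyz]; [exact Hxy | exact (lt_trans _ _ _ Hxy Hyz)]. Qed.

Lemma not_lt_le x y : ~ lt x y -> leT y x.
Proof.
  intros Hxy; destruct (lt_total x y) as [H | [-> | H]];
    [contradiction | left; reflexivity | right; exact H].
Qed.

Lemma exists_upper_bound2 x y : exists z, leT x z /\ leT y z.
Proof.
  destruct (lt_total x y) as [H | [-> | H]].
  - exists y; split; [right; exact H | left; reflexivity].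
  - exists y; split; left; reflexivity.
  - exists x; split; [left; reflexivity | right; exact H].
Qed.

Lemma exists_least (P : T -> Prop) :
  (exists x, P x) -> exists m, P m /\ forall z, lt z m -> ~ P z.
Proof.
  intros [x Hx]; apply NNPP; intros Hnone.
  assert (HnP : forall y, ~ P y).
  { intros y; induction y as [y IH] using (well_founded_ind lt_wf).
    intros Hy; apply Hnone; exists y; split; [exact Hy | exact IH]. }
  exact (HnP x Hx).
Qed.

Lemma exists_sup (R : T -> Prop) :
  (exists b, forall y, R y -> leT y b) -> exists s, is_sup T lt s R.
Proof.
  intros Hbound.
  destruct (exists_least _ Hbound) as [m [Hm Hmin]].
  exists m; split; [exact Hm|].
  intros u Hu; apply not_lt_le; intros Hum; exact (Hmin u Hum Hu).
Qed.

Lemma lt_sup_witness (R : T -> Prop) s x :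
  is_sup T lt s R -> lt x s -> exists c, R c /\ lt x c.
Proof.
  intros [_ Hleast] Hxs; apply NNPP; intros Hnone.
  assert (Hsx : leT s x).
  { apply Hleast; intros c Hc; apply not_lt_le; intros Hxc; apply Hnone; eauto. }
  exact (lt_irrefl x (lt_le_trans _ _ _ Hxs Hsx)).
Qed.

Definition cofinal_below (S : T -> Prop) (a : T) : Prop :=
  forall x, lt x a -> exists y, S y /\ leT x y /\ lt y a.

Lemma closed_gt m : closed T lt (lt m).
Proof.
  intros Q HQ [x Hx] s [Hub _].
  exact (lt_le_trans _ _ _ (HQ x Hx) (Hub x Hx)).
Qed.

Lemma closed_cofinal_below S : closed T lt (cofinal_below S).
Proof.
  intros Q HQ _ s Hsup x Hxs.
  destruct (lt_sup_witness Q s x Hsup Hxs) as [c [Hc Hxc]].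
  destruct (HQ c Hc x Hxc) as [y [Hy [Hxy Hyc]]].
  exists y; split; [exact Hy | split; [exact Hxy|]].
  exact (lt_le_trans _ _ _ Hyc (proj1 Hsup c Hc)).
Qed.

Section RegularUncountable.
Hypothesis Hreg : kappa_regular_cardinal T lt.
Hypothesis Hunc : kappa_uncountable T.

Lemma unbounded_le_card S : le_card T {x | S x} -> unbounded T lt S.
Proof.
  destruct Hreg as [_ [Hsmall _]].
  intros [i Hi] x; apply NNPP; intros Hnone.
  assert (HSx : forall y, S y -> lt y x).
  { intros y Hy; apply NNPP; intros Hyx; apply Hnone.
    exists y; split; [exact Hy | apply not_lt_le; exact Hyx]. }
  apply (Hsmall x).
  exists (fun t => exist (fun y => lt y x) (proj1_sig (i t)) (HSx _ (proj2_sig (i t)))).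
  intros t1 t2 Ht; apply Hi, eq_sig_hprop; [intros; apply proof_irrelevance|].
  exact (f_equal (@proj1_sig _ _) Ht).
Qed.

(* A largest element x would make the singleton {x} unbounded, yet T is
   infinite. *)
Lemma exists_gt x : exists z, lt x z.
Proof.
  destruct Hreg as [[f Hf] [_ Hbig]].
  apply NNPP; intros Hmax.
  assert (Hsingle : unbounded T lt (eq x)).
  { intros y; exists x; split; [reflexivity|].
    apply not_lt_le; intros Hxy; apply Hmax; exists y; exact Hxy. }
  destruct (Hbig _ Hsingle) as [i Hi].
  assert (H01 : f 0 = f 1).
  { apply Hi, eq_sig_hprop; [intros; apply proof_irrelevance|].
    destruct (i (f 0)) as [y0 <-], (i (f 1)) as [y1 <-]; reflexivity. }
  discriminate (Hf _ _ H01).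
Qed.

Lemma nat_seq_bounded (s : nat -> T) : exists b, forall n, lt (s n) b.
Proof.
  destruct Hreg as [_ [_ Hbig]].
  apply NNPP; intros Hnone.
  set (R := fun y => exists n, y = s n).
  assert (HR : unbounded T lt R).
  { intros x; apply NNPP; intros Hx; apply Hnone; exists x; intros n.
    apply NNPP; intros Hn; apply Hx.
    exists (s n); split; [exists n; reflexivity | apply not_lt_le; exact Hn]. }
  destruct (Hbig R HR) as [i Hi].
  apply Hunc.
  exists (fun t => proj1_sig (constructive_indefinite_description _ (proj2_sig (i t)))).
  intros t1 t2 Ht; apply Hi, eq_sig_hprop; [intros; apply proof_irrelevance|].
  destruct (constructive_indefinite_description _ (proj2_sig (i t1))) as [n1 E1].
  destruct (constructive_indefinite_description _ (proj2_sig (i t2))) as [n2 E2].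
  simpl in Ht; subst n2; congruence.
Qed.

Lemma club_gt m : club T lt (lt m).
Proof.
  split; [exact (closed_gt m)|].
  intros x; destruct (exists_upper_bound2 x m) as [u [Hxu Hmu]].
  destruct (exists_gt u) as [z Huz].
  exists z; split.
  - exact (le_lt_trans _ _ _ Hmu Huz).
  - right; exact (le_lt_trans _ _ _ Hxu Huz).
Qed.

(* The sup of x = s 0 < s 1 < ..., with s (n+1) in S, lies below kappa
   because kappa has uncountable cofinality. *)
Lemma unbounded_cofinal_below S : unbounded T lt S -> unbounded T lt (cofinal_below S).
Proof.
  intros HS x.
  assert (Hstep : forall t, exists y, S y /\ lt t y).
  { intros t; destruct (exists_gt t) as [z Htz]; destruct (HS z) as [y [Hy Hzy]].
    exists y; split; [exact Hy | exact (lt_le_trans _ _ _ Htz Hzy)]. }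
  destruct (choice _ Hstep) as [next Hnext].
  set (s := fun n => Nat.iter n next x).
  destruct (nat_seq_bounded s) as [b Hb].
  destruct (exists_sup (fun y => exists n, y = s n)) as [a Hsup].
  { exists b; intros y [n ->]; right; exact (Hb n). }
  assert (Hsa : forall n, leT (s n) a) by (intros n; apply (proj1 Hsup); exists n; reflexivity).
  exists a; split; [|exact (Hsa 0)].
  intros y Hya.
  destruct (lt_sup_witness _ a y Hsup Hya) as [c [[n ->] Hyc]].
  destruct (Hnext (s n)) as [HS1 Hlt1].
  destruct (Hnext (s (1 + n))) as [_ Hlt2].
  exists (s (1 + n)); split; [exact HS1 | split].
  - right; exact (lt_trans _ _ _ Hyc Hlt1).
  - exact (lt_le_trans _ _ _ Hlt2 (Hsa (2 + n))).
Qed.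

Lemma club_cofinal_below S : unbounded T lt S -> club T lt (cofinal_below S).
Proof.
  intros HS; split; [exact (closed_cofinal_below S) | exact (unbounded_cofinal_below S HS)].
Qed.

End RegularUncountable.

Section DiagonalFamily.
Variable A : T -> Prop.
Variable d : prodA T lt A.

Definition diagonal_family (al : T) : prodA T lt A :=
  fun a => match excluded_middle_informative (lt al (proj1_sig a)) with
           | left Hal => exist (fun y => lt y (proj1_sig a)) al Hal
           | right _ => d a
           end.

Lemma diagonal_familyE al a : lt al (proj1_sig a) -> proj1_sig (diagonal_family al a) = al.
Proof.
  intros Hal; unfold diagonal_family.
  destruct (excluded_middle_informative _); [reflexivity | contradiction].
Qed.

Lemma diagonal_family_injective :
  (forall m, exists a, A a /\ lt m a) -> injective diagonal_family.
Proof.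
  intros HA al be Heq.
  destruct (exists_upper_bound2 al be) as [m [Halm Hbem]].
  destruct (HA m) as [a [Ha Hma]].
  pose proof (f_equal (fun f => proj1_sig (f (exist A a Ha))) Heq) as Hval; cbv beta in Hval.
  rewrite (diagonal_familyE al), (diagonal_familyE be) in Hval;
    [exact Hval | exact (le_lt_trans _ _ _ Hbem Hma) | exact (le_lt_trans _ _ _ Halm Hma)].
Qed.

Lemma diagonal_family_undominated S :
  (exists a, A a /\ cofinal_below S a) ->
  ~ (exists g, forall i, S i -> dominated T lt A (diagonal_family i) g).
Proof.
  intros [a [Ha Hcof]] [g Hg].
  set (a' := exist A a Ha).
  destruct (Hcof _ (proj2_sig (g a'))) as [y [Hy [Hgy Hya]]].
  pose proof (Hg y Hy a') as Hdom.
  rewrite (diagonal_familyE y a' Hya) in Hdom.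
  exact (lt_irrefl y (lt_le_trans _ _ _ Hdom Hgy)).
Qed.

End DiagonalFamily.

End WellOrder.

Lemma prodA_inhabited (T : Type) (lt : T -> T -> Prop) (A : T -> Prop) :
  (forall a, A a -> exists x, lt x a) -> inhabited (prodA T lt A).
Proof.
  intros Hne; constructor; intros a.
  destruct (constructive_indefinite_description _ (Hne _ (proj2_sig a))) as [x Hx].
  exact (exist _ x Hx).
Qed.

Theorem proposition4p1 (T : Type) (lt : T -> T -> Prop)
  (Hwo : is_well_order T lt) (Hmahlo : kappa_mahlo T lt)
  (A : T -> Prop) (HAreg : forall a, A a -> regular_pt T lt a)
  (HAstat : stationary T lt A) :
  kappa_in_spec T lt A.
Proof.
  destruct Hmahlo as [Hreg [Hunc _]].
  (* Regularity of the points of A is used only to make prod A nonempty. *)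
  assert (HAne : forall a, A a -> exists x, lt x a).
  { intros a Ha; destruct (HAreg a Ha) as [[f _] _].
    exists (proj1_sig (f 0)); exact (proj2_sig (f 0)). }
  destruct (prodA_inhabited T lt A HAne) as [d].
  exists (diagonal_family T lt A d); split.
  - apply (diagonal_family_injective T lt Hwo).
    intros m; exact (HAstat _ (club_gt T lt Hwo Hreg m)).
  - intros S HS; apply (diagonal_family_undominated T lt Hwo).
    apply HAstat, (club_cofinal_below T lt Hwo Hreg Hunc).
    exact (unbounded_le_card T lt Hwo Hreg S HS).
Qed.
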